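(* Let $V'$ be an immediate extension of a valuation ring $V$, $K\subset K'$ their fraction field extension, $v=(v_j)_{j<\lambda}$ a pseudo-convergent sequence in $V$ which is not fundamental and has a pseudo limit $x$ in $V'$, but having no pseudo limit in $K$, and suppose $K'=K(x)$. Assume $x$ is transcendental over $K$ and either $\dim V=1$, or $V$ is Henselian. If $v$ is algebraic then $V'$ is not a filtered union of its localizations of polynomial $V$-subalgebras in one variable.
   Context: $\mathrm{val}$ is the valuation. $v$ is pseudo convergent if $\mathrm{val}(v_i-v_{i''})<\mathrm{val}(v_{i'}-v_{i''})$ for $i<i'<i''<\lambda$; $x$ is a pseudo limit if $\mathrm{val}(x-v_i)=\mathrm{val}(v_i-v_{i'})$ for $i<i'<\lambda$; $v$ is fundamental if for every $\gamma$ in the value group, $\mathrm{val}(v_i-v_{i'})>\gamma$ for large $i<i'$; $v$ is algebraic if some $f\in V[T]$ satisfies $\mathrm{val}(f(v_i))<\mathrm{val}(f(v_{i'}))$ for large enough $i<i'<\lambda$. *)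

(* Valuation rings are represented as subsets (Prop predicates)
   of an ambient field K'. *)
From mathcomp Require Import all_boot all_order all_algebra.
Set Implicit Arguments. Unset Strict Implicit. Unset Printing Implicit Defensive.
Import GRing.Theory.
Local Open Scope ring_scope.

Section Defs.
Variable F : fieldType.
Implicit Types (R K P Q S A : F -> Prop).

Definition subset_of P Q := forall z, P z -> Q z.
Definition strict_subset P Q := subset_of P Q /\ exists z, Q z /\ ~ P z.

Definition is_subfield K :=
  K 0 /\ K 1 /\ (forall a b, K a -> K b -> K (a - b)) /\
  (forall a b, K a -> K b -> K (a * b)) /\ (forall a, K a -> K a^-1).

Definition is_subring R :=
  R 1 /\ (forall a b, R a -> R b -> R (a - b)) /\
  (forall a b, R a -> R b -> R (a * b)).

Definition is_valring R :=
  is_subring R /\ forall z, z != 0 -> R z \/ R z^-1.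

(* the valuation ring V = V' ∩ K of K *)
Definition Vof K R : F -> Prop := fun z => K z /\ R z.

Definition unit_in R z := z != 0 /\ R z /\ R z^-1.
Definition maxideal R z := R z /\ ~ unit_in R z.

(* valuation comparison induced by the valuation ring R:
   val a <= val b  iff  a divides b in R  (val 0 = +oo) *)
Definition vle R a b := exists c, R c /\ b = a * c.
Definition vlt R a b := vle R a b /\ ~ vle R b a.
Definition veq R a b := vle R a b /\ vle R b a.

(* V' (valuation ring of F) is an immediate extension of V = V' ∩ K
   (K the fraction field of V): same value group and same residue field *)
Definition immediate K R :=
  (forall z, z != 0 -> exists a, K a /\ a != 0 /\ unit_in R (z / a)) /\
  (forall z, R z -> exists a, Vof K R a /\ maxideal R (z - a)).

Definition limit_ordinal (I : Type) (lt : I -> I -> Prop) :=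
  (forall i, ~ lt i i) /\ (forall i j k, lt i j -> lt j k -> lt i k) /\
  (forall i j, lt i j \/ i = j \/ lt j i) /\ well_founded lt /\
  (exists i : I, True) /\ (forall i, exists j, lt i j).

Definition ole (I : Type) (lt : I -> I -> Prop) i j := i = j \/ lt i j.

Definition pseudo_convergent R (I : Type) (lt : I -> I -> Prop) (v : I -> F) :=
  forall i i' i'', lt i i' -> lt i' i'' -> vlt R (v i - v i'') (v i' - v i'').

Definition pseudo_limit R (I : Type) (lt : I -> I -> Prop) (v : I -> F) x :=
  forall i i', lt i i' -> veq R (x - v i) (v i - v i').

(* fundamental: for every gamma = val c in the value group of V (c in K^x),
   val (v_i - v_i') > gamma for large i < i' *)
Definition fundamental K R (I : Type) (lt : I -> I -> Prop) (v : I -> F) :=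
  forall c, K c -> c != 0 -> exists i0, forall i i', ole lt i0 i -> lt i i' ->
    vlt R c (v i - v i').

Definition algebraic_seq V R (I : Type) (lt : I -> I -> Prop) (v : I -> F) :=
  exists f : {poly F}, (forall n, V f`_n) /\
    exists i0, forall i i', ole lt i0 i -> lt i i' -> vlt R f.[v i] f.[v i'].

Definition transcendental_over K x :=
  forall p : {poly F}, (forall n, K p`_n) -> p.[x] = 0 -> p = 0.

Definition generated_by K x :=
  forall z, exists p q : {poly F}, (forall n, K p`_n) /\ (forall n, K q`_n) /\
    q.[x] != 0 /\ z = p.[x] / q.[x].

Definition prime_ideal R P :=
  subset_of P R /\ P 0 /\ (forall a b, P a -> P b -> P (a + b)) /\
  (forall a b, R a -> P b -> P (a * b)) /\ ~ P 1 /\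
  (forall a b, R a -> R b -> P (a * b) -> P a \/ P b).

Definition krull_dim1 R :=
  (exists P Q, prime_ideal R P /\ prime_ideal R Q /\ strict_subset P Q) /\
  ~ (exists P Q S, prime_ideal R P /\ prime_ideal R Q /\ prime_ideal R S /\
       strict_subset P Q /\ strict_subset Q S).

Definition henselian R :=
  forall f : {poly F}, (forall n, R f`_n) -> f \is monic ->
  forall a, R a -> maxideal R f.[a] -> unit_in R (f^`()).[a] ->
  exists b, R b /\ f.[b] = 0 /\ maxideal R (b - a).

Definition Valg V y z := exists p : {poly F}, (forall n, V p`_n) /\ z = p.[y].

Definition loc_poly_subalg V A :=
  exists y, (forall p : {poly F}, (forall n, V p`_n) -> p.[y] = 0 -> p = 0) /\
  exists S, subset_of S (Valg V y) /\ S 1 /\ ~ S 0 /\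
    (forall a b, S a -> S b -> S (a * b)) /\
    (forall z, A z <-> exists f s, Valg V y f /\ S s /\ z = f / s).

Definition filtered_union_loc_poly V R :=
  exists (J : Type) (A : J -> F -> Prop),
    (exists j : J, True) /\ (forall j, loc_poly_subalg V (A j)) /\
    (forall j1 j2, exists k, subset_of (A j1) (A k) /\ subset_of (A j2) (A k)) /\
    (forall z, R z <-> exists j, A j z).

End Defs.

From mathcomp Require Import all_boot all_order all_algebra.
From Stdlib Require Import Classical.
From mathcomp Require Import ring.
Set Implicit Arguments. Unset Strict Implicit. Unset Printing Implicit Defensive.
Import GRing.Theory.
Local Open Scope ring_scope.

(* If V' were a filtered union of localizations S^-1 V[y], then x and any
   z = Z1(x)/Z2(x) in V' would lie in one of them: x = g(y)/s(y) and
   z = g1(y)/s1(y) with s1(y) a unit of V'.  As y lies in K(x) and x in K(y),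
   with x transcendental, y = M(x) for a Moebius map M with coefficients in K
   (write y = P(x)/Q(x) in lowest terms and compare x s(P/Q) = g(P/Q) modulo
   P and Q).  Since v has no pseudo limit in K, the values M(v_i) eventually
   approach y with val (y - M(v_i)) > 0, so s1(M(v_i)) stays a unit and the
   identity Z1 s1(M) = Z2 g1(M), which holds identically by transcendence,
   gives Z1(v_i)/Z2(v_i) in V' for large i.  For the polynomial f witnessing
   that v is algebraic, applying this to f(x)/a (a in K of the same value as
   f(x)) and then to f(v_j)/f(x) bounds val f(v_i) from above, against its
   strict increase. *)

Section Subring.
Variables (F : fieldType) (S : F -> Prop).
Hypothesis HS : is_subring S.

Lemma subring1 : S 1.
Proof. by case: HS. Qed.

Lemma subringB a b : S a -> S b -> S (a - b).
Proof. by move: HS => [_ [hB _]]; apply: hB. Qed.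

Lemma subringM a b : S a -> S b -> S (a * b).
Proof. by move: HS => [_ [_ hM]]; apply: hM. Qed.

Lemma subring0 : S 0.
Proof. by rewrite -(subrr 1); apply: subringB; apply: subring1. Qed.

Lemma subringN a : S a -> S (- a).
Proof. by move=> Sa; rewrite -sub0r; apply: subringB => //; apply: subring0. Qed.

Lemma subringD a b : S a -> S b -> S (a + b).
Proof. by move=> Sa Sb; rewrite -(opprK b); apply: subringB => //; apply: subringN. Qed.

Lemma subringX a n : S a -> S (a ^+ n).
Proof.
move=> Sa; elim: n => [|n IH]; first by rewrite expr0; apply: subring1.
by rewrite exprS; apply: subringM.
Qed.

Lemma subring_sum (J : Type) (r : seq J) (P : pred J) (G : J -> F) :
  (forall j, P j -> S (G j)) -> S (\sum_(j <- r | P j) G j).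
Proof. by move=> SG; apply: (big_ind S) => //; [apply: subring0 | apply: subringD]. Qed.

Definition coefs_in (p : {poly F}) := forall n, S p`_n.

Lemma coefs_inC c : S c -> coefs_in c%:P.
Proof. by move=> Sc n; rewrite coefC; case: ifP => _ //; apply: subring0. Qed.

Lemma coefs_inX : coefs_in 'X.
Proof. by move=> n; rewrite coefX; case: (n == 1)%N; [apply: subring1 | apply: subring0]. Qed.

Lemma coefs_inD p q : coefs_in p -> coefs_in q -> coefs_in (p + q).
Proof. by move=> Sp Sq n; rewrite coefD; apply: subringD. Qed.

Lemma coefs_inB p q : coefs_in p -> coefs_in q -> coefs_in (p - q).
Proof. by move=> Sp Sq n; rewrite coefB; apply: subringB. Qed.

Lemma coefs_inZ c p : S c -> coefs_in p -> coefs_in (c *: p).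
Proof. by move=> Sc Sp n; rewrite coefZ; apply: subringM. Qed.

Lemma coefs_inM p q : coefs_in p -> coefs_in q -> coefs_in (p * q).
Proof. by move=> Sp Sq n; rewrite coefM; apply: subring_sum => i _; apply: subringM. Qed.

Lemma coefs_inXn p n : coefs_in p -> coefs_in (p ^+ n).
Proof.
move=> Sp; elim: n => [|n IH]; first by rewrite expr0; apply: coefs_inC; apply: subring1.
by rewrite exprS; apply: coefs_inM.
Qed.

Lemma coefs_in_sum (J : Type) (r : seq J) (P : pred J) (G : J -> {poly F}) :
  (forall j, P j -> coefs_in (G j)) -> coefs_in (\sum_(j <- r | P j) G j).
Proof.
move=> SG; apply: (big_ind coefs_in) => //; last exact: coefs_inD.
by apply: coefs_inC; apply: subring0.
Qed.

Lemma coefs_in_horner p t : coefs_in p -> S t -> S p.[t].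
Proof.
move=> Sp St; rewrite horner_coef; apply: subring_sum => i _.
by apply: subringM => //; apply: subringX.
Qed.

End Subring.

Lemma coefs_in_sub (F : fieldType) (S T : F -> Prop) (p : {poly F}) :
  subset_of S T -> coefs_in S p -> coefs_in T p.
Proof. by move=> ST Sp n; apply: ST. Qed.

Lemma coefs_in_mulX (F : fieldType) (S : F -> Prop) (p : {poly F}) :
  coefs_in S p -> p`_0 = 0 -> exists a, coefs_in S a /\ p = a * 'X.
Proof.
move=> Sp p0; exists (drop_poly 1 p); split; first by move=> n; rewrite coef_drop_poly.
rewrite -{1}(poly_take_drop 1 p) expr1 -[RHS]add0r; congr (_ + _).
by apply/polyP => n; rewrite coef_take_poly coef0; case: n => [|n] //=; rewrite p0.
Qed.

Lemma subfield_subring (F : fieldType) (K : F -> Prop) : is_subfield K -> is_subring K.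
Proof. by case=> _ [? [? [? _]]]. Qed.

Lemma subfieldV (F : fieldType) (K : F -> Prop) a : is_subfield K -> K a -> K a^-1.
Proof. by case=> _ [_ [_ [_ hV]]]; apply: hV. Qed.

Lemma subringI (F : fieldType) (K R : F -> Prop) :
  is_subring K -> is_subring R -> is_subring (Vof K R).
Proof.
move=> HK HR; split; first by split; apply: subring1.
by split=> a b [Ka Ra] [Kb Rb]; split;
  [apply: subringB | apply: subringB | apply: subringM | apply: subringM].
Qed.

Section Valuation.
Variables (F : fieldType) (R : F -> Prop).
Hypothesis HR : is_valring R.
Let HRs : is_subring R := HR.1.

Lemma vle_refl a : vle R a a.
Proof. by exists 1; split; [apply: subring1 | rewrite mulr1]. Qed.

Lemma vle_trans a b c : vle R a b -> vle R b c -> vle R a c.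
Proof.
case=> [d [Rd ->]] [e [Re ->]]; exists (d * e).
by split; [apply: subringM | rewrite mulrA].
Qed.

Lemma vle0 a : vle R a 0.
Proof. by exists 0; split; [apply: subring0 | rewrite mulr0]. Qed.

Lemma vle_total a b : vle R a b \/ vle R b a.
Proof.
have [->|a0] := eqVneq a 0; first by right; apply: vle0.
have [->|b0] := eqVneq b 0; first by left; apply: vle0.
have ba0 : b / a != 0 by rewrite mulf_neq0 ?invr_eq0.
case: (HR.2 _ ba0) => h; [left; exists (b / a) | right; exists (b / a)^-1].
  by split=> //; rewrite mulrC divfK.
by split=> //; rewrite invf_div mulrC divfK.
Qed.

Lemma vleD c a b : vle R c a -> vle R c b -> vle R c (a + b).
Proof.
case=> [d [Rd ->]] [e [Re ->]]; exists (d + e).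
by split; [apply: subringD | rewrite mulrDr].
Qed.

Lemma vleN c a : vle R c a -> vle R c (- a).
Proof. by case=> [d [Rd ->]]; exists (- d); split; [apply: subringN | rewrite mulrN]. Qed.

Lemma vleNl c a : vle R (- c) a -> vle R c a.
Proof. by case=> [d [Rd ->]]; exists (- d); split; [apply: subringN | rewrite mulNr mulrN]. Qed.

Lemma vleB c a b : vle R c a -> vle R c b -> vle R c (a - b).
Proof. by move=> ca cb; apply: vleD => //; apply: vleN. Qed.

Lemma vle_mulr a b c : vle R a b -> R c -> vle R a (b * c).
Proof.
case=> [d [Rd ->]] Rc; exists (d * c).
by split; [apply: subringM | rewrite mulrA].
Qed.

Lemma vle1 a : vle R 1 a <-> R a.
Proof. by split=> [[c [Rc ->]] | Ra]; [rewrite mul1r | exists a; rewrite mul1r]. Qed.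

Lemma vle_div a b : a != 0 -> vle R a b <-> R (b / a).
Proof.
move=> a0; split=> [[c [Rc ->]] | Rba]; first by rewrite mulrC mulKf.
by exists (b / a); split=> //; rewrite mulrC divfK.
Qed.

Lemma vle_neq0 a b : b != 0 -> vle R a b -> a != 0.
Proof. by move=> b0 [c [_ eb]]; apply: contraNneq b0 => a0; rewrite eb a0 mul0r. Qed.

Lemma vle_unit w : vle R w 1 -> w != 0 /\ R w^-1.
Proof.
move=> w1; have w0 := vle_neq0 (oner_neq0 F) w1.
by split=> //; rewrite -div1r; apply/vle_div.
Qed.

Lemma vle_mul2l c a b : c != 0 -> vle R (c * a) (c * b) <-> vle R a b.
Proof.
move=> c0; split=> [[d [Rd e]] | [d [Rd ->]]]; exists d; split=> //.
  by apply: (mulfI c0); rewrite e mulrA.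
by rewrite mulrA.
Qed.

Lemma vlt_irr a : ~ vlt R a a.
Proof. by case. Qed.

Lemma vlt_nle a b : vlt R a b <-> ~ vle R b a.
Proof. by split=> [[] | nba] //; split=> //; case: (vle_total a b). Qed.

Lemma vlt_le_trans a b c : vlt R a b -> vle R b c -> vlt R a c.
Proof. by move=> [ab nba] bc; split; [apply: vle_trans bc | move/(vle_trans bc)]. Qed.

Lemma vle_lt_trans a b c : vle R a b -> vlt R b c -> vlt R a c.
Proof. by move=> ab [bc ncb]; split; [apply: vle_trans bc | move=> /vle_trans/(_ ab)]. Qed.

Lemma vlt_mul2l c a b : c != 0 -> vlt R (c * a) (c * b) <-> vlt R a b.
Proof. by move=> c0; rewrite /vlt !vle_mul2l. Qed.

Lemma vlt_div a b : a != 0 -> vlt R a b <-> vlt R 1 (b / a).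
Proof. by move=> a0; rewrite -(vlt_mul2l _ _ (invr_neq0 a0)) mulVf // mulrC. Qed.

Lemma vlt_neq0 a b : vlt R a b -> a != 0.
Proof. by move=> [_ nba]; apply/eqP => a0; apply: nba; rewrite a0; apply: vle0. Qed.

Lemma vlt0 a : a != 0 -> vlt R a 0.
Proof. by move=> a0; split=> [|[c [_ ea]]]; [apply: vle0 | rewrite ea mul0r eqxx in a0]. Qed.

Lemma vlt1_mulr a b : vlt R 1 a -> R b -> vlt R 1 (a * b).
Proof.
move=> [a1 na1] Rb; split; first exact: vle_mulr.
move=> [c [Rc e]]; apply: na1; exists (b * c).
by split; [apply: subringM | rewrite mulrA].
Qed.

Lemma veq_trans a b c : veq R a b -> veq R b c -> veq R a c.
Proof. by move=> [ab ba] [bc cb]; split; apply: vle_trans; eassumption. Qed.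

Lemma veq_addl a b : vlt R a b -> veq R (a + b) a.
Proof.
move=> [ab nba]; split; last by apply: vleD => //; apply: vle_refl.
have ea : a = (a + b) - b by rewrite addrK.
case: (vle_total (a + b) b) => h.
  by rewrite {2}ea; apply: vleB => //; apply: vle_refl.
by case: nba; rewrite ea; apply: vleB => //; apply: vle_refl.
Qed.

Lemma veq_subl a b : vlt R a b -> veq R (a - b) a.
Proof.
move=> [ab nba]; apply: veq_addl; split; first exact: vleN.
by move=> /vleNl.
Qed.

Lemma maxideal_vlt1 z : maxideal R z -> vlt R 1 z.
Proof.
move=> [Rz nu]; split; first exact/vle1.
by move=> /vle_unit [z0 Rz1]; apply: nu.
Qed.

Lemma unit_veq c z : c != 0 -> unit_in R (z / c) -> veq R c z.
Proof.
move=> c0 [zc0 [Rzc Rcz]]; have z0 : z != 0 by apply: contraNneq zc0 => ->; rewrite mul0r.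
by split; apply/vle_div; rewrite // -invf_div.
Qed.

Lemma vle_horner_sub (p : {poly F}) a b :
  coefs_in R p -> R a -> R b -> vle R (a - b) (p.[a] - p.[b]).
Proof.
move=> + Ra Rb; elim/poly_ind: p => [|p c IH] Rp; first by rewrite !horner0 subrr; apply: vle0.
have Rp' : coefs_in R p.
  by move=> n; move: (Rp n.+1); rewrite coefD coefMX coefC /= addr0.
rewrite !hornerMXaddC.
have -> : p.[a] * a + c - (p.[b] * b + c) = (p.[a] - p.[b]) * a + (a - b) * p.[b] by ring.
apply: vleD; first by apply: vle_mulr => //; apply: IH.
by apply: vle_mulr; [apply: vle_refl | apply: coefs_in_horner].
Qed.

Lemma horner_unit_perturb (s : {poly F}) y u :
  coefs_in R s -> R y -> R u -> vlt R 1 (y - u) ->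
  s.[y] != 0 -> R s.[y]^-1 -> s.[u] != 0 /\ R s.[u]^-1.
Proof.
move=> Rs Ry Ru yu sy0 Rsy.
have small : vlt R 1 ((s.[y] - s.[u]) / s.[y]).
  have [c [Rc ->]] := vle_horner_sub Rs Ry Ru.
  by rewrite -mulrA; apply: vlt1_mulr => //; apply: subringM.
have [w0 Rw] := vle_unit (proj1 (veq_subl small)).
have -> : s.[u] = s.[y] * (1 - (s.[y] - s.[u]) / s.[y]) by field.
by rewrite invfM mulf_neq0 //; split=> //; apply: subringM.
Qed.

End Valuation.

Section LimitOrdinal.
Variables (I : Type) (lt : I -> I -> Prop).
Hypothesis HL : limit_ordinal lt.

Lemma lo_inhabited : exists i : I, True.
Proof. by case: HL => _ [_ [_ [_ []]]]. Qed.

Lemma lo_succ i : exists j, lt i j.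
Proof. by case: HL => _ [_ [_ [_ [_ h]]]]. Qed.

Lemma lo_trans i j k : lt i j -> lt j k -> lt i k.
Proof. by case: HL => _ [h _]; apply: h. Qed.

Lemma lo_total i j : lt i j \/ i = j \/ lt j i.
Proof. by case: HL => _ [_ [h _]]. Qed.

Lemma ole_trans i j k : ole lt i j -> ole lt j k -> ole lt i k.
Proof. by move=> [->|ij] [<-|jk]; [left | right | right | right; apply: lo_trans jk]. Qed.

Lemma ole_lt_trans i j k : ole lt i j -> lt j k -> lt i k.
Proof. by move=> [->|ij] jk //; apply: lo_trans jk. Qed.

Lemma lo_join i j : exists k, ole lt i k /\ ole lt j k.
Proof.
case: (lo_total i j) => [ij | [<- | ji]]; first by exists j; split; [right | left].
  by exists i; split; left.
by exists i; split; [left | right].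
Qed.

End LimitOrdinal.

Section PseudoLimit.
Variables (F : fieldType) (R : F -> Prop) (I : Type) (lt : I -> I -> Prop).
Variables (v : I -> F) (x : F).
Hypotheses (HR : is_valring R) (HL : limit_ordinal lt).
Hypotheses (hpc : pseudo_convergent R lt v) (hx : pseudo_limit R lt v x).

Lemma pseudo_limit_vlt i i' : lt i i' -> vlt R (x - v i) (x - v i').
Proof.
move=> ii'; have [i'' i'i''] := lo_succ HL i'.
apply: (vle_lt_trans HR (hx (lo_trans HL ii' i'i'')).1).
exact: (vlt_le_trans HR (hpc ii' i'i'') (hx i'i'').2).
Qed.

Lemma pseudo_limit_vle i i' : ole lt i i' -> vle R (x - v i) (x - v i').
Proof. by case=> [-> | /pseudo_limit_vlt []] //; apply: vle_refl. Qed.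

Lemma pseudo_limit_of_closer t :
  (forall i, vlt R (x - v i) (x - t)) -> pseudo_limit R lt v t.
Proof.
move=> closer i i' ii'; apply: (veq_trans HR _ (hx ii')).
have -> : t - v i = (x - v i) - (x - t) by ring.
exact: veq_subl.
Qed.

Lemma not_pseudo_limit_eventually t : ~ pseudo_limit R lt v t ->
  exists i1, forall i, ole lt i1 i -> vlt R (x - t) (x - v i).
Proof.
move=> nlim; apply: NNPP => never; apply: nlim; apply: pseudo_limit_of_closer => i.
have [i' ii'] := lo_succ HL i.
apply: (vlt_le_trans HR (pseudo_limit_vlt ii')).
apply: NNPP => /(vlt_nle HR) tx; apply: never; exists i' => j i'j.
exact: (vlt_le_trans HR tx (pseudo_limit_vle i'j)).
Qed.

End PseudoLimit.

Lemma size_sub_scale_lt (F : fieldType) (r d : {poly F}) : d != 0 ->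
  (size r <= size d)%N ->
  (size (r - (r`_(size d).-1 / lead_coef d) *: d)%R < size d)%N.
Proof.
move=> d0 rd; rewrite (polySpred d0) ltnS; apply/leq_sizeP => j.
rewrite coefB coefZ leq_eqVlt => /orP [/eqP <- | dj].
  by rewrite -lead_coefE divfK ?subrr ?lead_coef_eq0.
have /leq_sizeP/(_ j (leqnn j)) -> : (size r <= j)%N.
  by apply: leq_trans rd _; rewrite (polySpred d0).
have /leq_sizeP/(_ j (leqnn j)) -> : (size d <= j)%N by rewrite (polySpred d0).
by rewrite mulr0 subrr.
Qed.

Section SubfieldPolynomials.
Variables (F : fieldType) (K : F -> Prop).
Hypothesis HK : is_subfield K.
Let HKs := subfield_subring HK.

Lemma coefs_in_edivp p d : coefs_in K p -> coefs_in K d -> d != 0 ->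
  exists a r, [/\ coefs_in K a, coefs_in K r, p = a * d + r & (size r < size d)%N].
Proof.
move=> + Kd d0; elim/poly_ind: p => [|p c IH] Kpc.
  have K0 := coefs_inC HKs (subring0 HKs).
  by exists 0, 0; rewrite mul0r addr0 size_poly0 size_poly_gt0.
have Kp : coefs_in K p.
  by move=> n; move: (Kpc n.+1); rewrite coefD coefMX coefC /= addr0.
have Kc : K c by move: (Kpc 0%N); rewrite coefD coefMX coefC /= add0r.
have [a [r [Ka Kr -> rd]]] := IH Kp.
set r1 := r * 'X + c%:P; set e := r1`_(size d).-1 / lead_coef d.
have Kr1 : coefs_in K r1.
  by apply: coefs_inD => //; [apply: coefs_inM => //; apply: coefs_inX | apply: coefs_inC].
have Ke : K e by apply: subringM => //; rewrite lead_coefE; apply: subfieldV.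
exists (a * 'X + e%:P), (r1 - e *: d); split.
- by apply: coefs_inD => //; [apply: coefs_inM => //; apply: coefs_inX | apply: coefs_inC].
- by apply: coefs_inB => //; apply: coefs_inZ.
- by rewrite /r1 -mul_polyC; ring.
apply: size_sub_scale_lt => //; rewrite /r1 size_MXaddC.
by case: ifP => // _; apply: rd.
Qed.

Lemma coprime_factorization P Q : coefs_in K P -> coefs_in K Q -> Q != 0 ->
  exists D P1 Q1, [/\ coefs_in K D, coefs_in K P1, coefs_in K Q1 &
    [/\ P = P1 * D, Q = Q1 * D & coprimep P1 Q1]].
Proof.
move: {2}(size Q) (leqnn (size Q)) => n; elim: n P Q => [|n IH] P Q sQ KP KQ Q0.
  by move: Q0; rewrite -size_poly_gt0; case: (size Q) sQ.
have [a [r [Ka Kr eP rQ]]] := coefs_in_edivp KP KQ Q0.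
have K1 := coefs_inC HKs (subring1 HKs).
have [r0 | r0] := eqVneq r 0.
  by exists Q, a, 1; split=> //; rewrite mul1r coprimep1 eP r0 addr0.
have [D [Q1 [r1 [KD KQ1 Kr1 [eQ er cop]]]]] := IH Q r (leq_trans rQ sQ) KQ Kr r0.
exists D, (a * Q1 + r1), Q1; split=> //.
- by apply: coefs_inD => //; apply: coefs_inM.
split=> //; first by rewrite eP {1}eQ er; ring.
by rewrite coprimep_sym coprimep_addl_mul.
Qed.

End SubfieldPolynomials.

Section Homogenization.
Variable F : fieldType.
Implicit Types (h P Q D E : {poly F}).

Definition homog m h P Q : {poly F} := \sum_(k < m.+1) h`_k *: (P ^+ k * Q ^+ (m - k)).

Lemma horner_homog m h P Q t : Q.[t] != 0 -> (size h <= m.+1)%N ->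
  (homog m h P Q).[t] = Q.[t] ^+ m * h.[P.[t] / Q.[t]].
Proof.
move=> Qt0 sh; rewrite /homog horner_sum (horner_coef_wide _ sh) mulr_sumr.
apply: eq_bigr => -[k /=]; rewrite ltnS => lekm _.
rewrite hornerZ hornerM !horner_exp expr_div_n -{2}(subnK lekm) exprD.
by field; rewrite expf_neq0.
Qed.

Lemma coefs_in_homog (S : F -> Prop) m h P Q : is_subring S ->
  coefs_in S h -> coefs_in S P -> coefs_in S Q -> coefs_in S (homog m h P Q).
Proof.
move=> HS Sh SP SQ; apply: coefs_in_sum => // k _.
by apply: coefs_inZ => //; apply: coefs_inM => //; apply: coefs_inXn.
Qed.

Lemma dvdp_sum_scale D (J : finType) (c : J -> F) (G : J -> {poly F}) :
  (forall j, D %| G j) -> D %| \sum_j c j *: G j.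
Proof.
move=> DG; apply: (big_ind (fun p => D %| p)) => [|p q|j _]; first exact: dvdp0.
  exact: dvdp_add.
by rewrite -mul_polyC; apply: dvdp_mull.
Qed.

Lemma dvdp_homog_top m h P Q : Q %| homog m h P Q - h`_m *: P ^+ m.
Proof.
rewrite /homog big_ord_recr /= subnn expr0 mulr1 addrK.
apply: dvdp_sum_scale => -[k /= ltkm]; apply: dvdp_mull.
by apply: dvdp_exp; [rewrite subn_gt0 | apply: dvdpp].
Qed.

Lemma dvdp_homog_bottom m h P Q : P %| homog m h P Q - h`_0 *: Q ^+ m.
Proof.
rewrite /homog big_ord_recl /= expr0 mul1r subn0 addrAC subrr add0r.
by apply: dvdp_sum_scale => k; apply: dvdp_mulr; apply: dvdp_exp => //; apply: dvdpp.
Qed.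

Lemma dvdp_linear_coprime D E hs hg a b : coprimep D E -> 'X * hs = hg ->
  D %| hs - a *: E -> D %| hg - b *: E -> D %| a%:P * 'X - b%:P.
Proof.
move=> cop eX Ds Dg; rewrite -(Gauss_dvdpl _ cop).
have -> : (a%:P * 'X - b%:P) * E = (hg - b *: E) - 'X * (hs - a *: E) + ('X * hs - hg).
  by rewrite -!mul_polyC; ring.
by rewrite eX subrr addr0 dvdp_sub // dvdp_mull.
Qed.

Lemma homog_linear_dvdp m s g P Q : coprimep P Q -> 'X * homog m s P Q = homog m g P Q ->
  Q %| (s`_m)%:P * 'X - (g`_m)%:P /\ P %| (s`_0)%:P * 'X - (g`_0)%:P.
Proof.
move=> cop eX.
have cQ : coprimep Q (P ^+ m) by apply: coprimep_expr; rewrite coprimep_sym.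
have cP : coprimep P (Q ^+ m) by apply: coprimep_expr.
split; [apply: (dvdp_linear_coprime cQ eX) | apply: (dvdp_linear_coprime cP eX)];
  by [apply: dvdp_homog_top | apply: dvdp_homog_bottom].
Qed.

Lemma size_dvdp_linear P a b : (a != 0) || (b != 0) ->
  P %| a%:P * 'X - b%:P -> (size P <= 2)%N.
Proof.
move=> ab0; rewrite -polyCN => /dvdp_leq.
rewrite -size_poly_eq0 size_MXaddC polyC_eq0 oppr_eq0.
case: ifP => [/andP [/eqP a0 /eqP b0] | _ /(_ isT) leP]; first by rewrite a0 b0 eqxx in ab0.
by apply: leq_trans leP _; rewrite ltnS size_polyC_leq1.
Qed.

Lemma horner_size2 (p : {poly F}) t : (size p <= 2)%N -> p.[t] = p`_1 * t + p`_0.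
Proof.
move=> sp; rewrite (horner_coef_wide _ sp) !big_ord_recr big_ord0 /=.
by rewrite add0r expr0 expr1 mulr1 addrC.
Qed.

End Homogenization.

Lemma coef_maxn_size_neq0 (F : fieldType) (g s : {poly F}) m :
  m.+1 = maxn (size g) (size s) -> (s`_m != 0) || (g`_m != 0).
Proof.
case: (leqP (size g) (size s)) => _ em; have -> : m = m.+1.-1 by [].
  by rewrite {1}em -lead_coefE lead_coef_eq0 -size_poly_gt0 -em.
by rewrite {2}em -lead_coefE lead_coef_eq0 -size_poly_gt0 -em orbT.
Qed.

Lemma coefs_bottom_reduction (F : fieldType) (S : F -> Prop) (x y : F) g s :
  y != 0 -> coefs_in S g -> coefs_in S s -> s.[y] != 0 -> x * s.[y] = g.[y] ->
  exists g' s', [/\ coefs_in S g', coefs_in S s', s'.[y] != 0, x * s'.[y] = g'.[y] &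
    (s'`_0 != 0) || (g'`_0 != 0)].
Proof.
move=> y0; move: {2}(size s) (leqnn (size s)) => n.
elim: n g s => [|n IH] g s ss Sg Ss sy exs.
  by move: sy; move/size_poly_leq0P: ss => ->; rewrite horner0 eqxx.
have [bot | ] := boolP ((s`_0 != 0) || (g`_0 != 0)); first by exists g, s.
rewrite negb_or !negbK => /andP [/eqP s0 /eqP g0].
have [a [Sa ea]] := coefs_in_mulX Sg g0; have [b [Sb eb]] := coefs_in_mulX Ss s0.
have by0 : b.[y] != 0 by apply: contraNneq sy; rewrite eb hornerMX => ->; rewrite mul0r.
apply: (IH a b) => //.
- have b0 : b != 0 by apply: contraNneq by0 => ->; rewrite horner0.
  by move: ss; rewrite eb size_mulX.
- by apply: (mulIf y0); rewrite -mulrA -!hornerMX -ea -eb.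
Qed.

Definition mobius (F : fieldType) (p1 p0 q1 q0 t : F) := (p1 * t + p0) / (q1 * t + q0).

Section Transcendental.
Variables (F : fieldType) (K : F -> Prop) (x : F).
Hypotheses (HK : is_subfield K) (htr : transcendental_over K x).
Let HKs := subfield_subring HK.

Lemma transcendental_notin : ~ K x.
Proof.
move=> Kx; have := htr (coefs_inB HKs (coefs_inX HKs) (coefs_inC HKs Kx)).
by rewrite hornerXsubC subrr => /(_ erefl) /eqP; rewrite -size_poly_eq0 size_XsubC.
Qed.

Lemma homog_identity m Z1 Z2 g s P Q :
  coefs_in K Z1 -> coefs_in K Z2 -> coefs_in K g -> coefs_in K s ->
  coefs_in K P -> coefs_in K Q -> (size g <= m.+1)%N -> (size s <= m.+1)%N ->
  Q.[x] != 0 -> Z1.[x] * s.[P.[x] / Q.[x]] = Z2.[x] * g.[P.[x] / Q.[x]] ->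
  Z1 * homog m s P Q = Z2 * homog m g P Q.
Proof.
move=> KZ1 KZ2 Kg Ks KP KQ sg ss Qx0 e; apply/eqP; rewrite -subr_eq0; apply/eqP/htr.
  by apply: (coefs_inB HKs); apply: (coefs_inM HKs) => //; apply: coefs_in_homog.
by rewrite hornerD hornerN !hornerM !horner_homog // mulrCA e mulrCA subrr.
Qed.

Lemma mobius_of_inverse y P Q g s :
  coefs_in K P -> coefs_in K Q -> Q.[x] != 0 -> y = P.[x] / Q.[x] ->
  coefs_in K g -> coefs_in K s -> s.[y] != 0 -> x = g.[y] / s.[y] ->
  exists p1 p0 q1 q0, [/\ K p1, K p0, K q1, K q0 &
    q1 * x + q0 != 0 /\ y = mobius p1 p0 q1 q0 x].
Proof.
move=> KP KQ Qx0 ey Kg Ks sy0 ex.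
have y0 : y != 0.
  apply/eqP => y0; apply: transcendental_notin.
  rewrite ex y0 !horner_coef0.
  by apply: subringM => //; apply: subfieldV.
have exs : x * s.[y] = g.[y] by rewrite ex divfK.
have [g1 [s1 [Kg1 Ks1 s1y0 exs1 bot]]] := coefs_bottom_reduction y0 Kg Ks sy0 exs.
have s10 : s1 != 0 by apply: contraNneq s1y0 => ->; rewrite horner0.
set m := (maxn (size g1) (size s1)).-1.
have em : m.+1 = maxn (size g1) (size s1).
  by rewrite prednK // leq_max !size_poly_gt0 s10 orbT.
have Q0 : Q != 0 by apply: contraNneq Qx0 => ->; rewrite horner0.
have [D [P1 [Q1 [KD KP1 KQ1 [eP eQ cop]]]]] := coprime_factorization HK KP KQ Q0.
have Q1x0 : Q1.[x] != 0 by apply: contraNneq Qx0; rewrite eQ hornerM => ->; rewrite mul0r.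
have Dx0 : D.[x] != 0 by apply: contraNneq Qx0; rewrite eQ hornerM => ->; rewrite mulr0.
have ey1 : y = P1.[x] / Q1.[x] by rewrite ey eP eQ !hornerM invfM mulrACA divff // mulr1.
have eh : 'X * homog m s1 P1 Q1 = homog m g1 P1 Q1.
  rewrite -[homog m g1 _ _]mul1r; apply: homog_identity => //.
  - exact: coefs_inX.
  - exact: (coefs_inC HKs (subring1 HKs)).
  - by rewrite em leq_maxl.
  - by rewrite em leq_maxr.
  by rewrite hornerX hornerC mul1r -ey1.
have [dQ dP] := homog_linear_dvdp cop eh.
have sQ1 := size_dvdp_linear (coef_maxn_size_neq0 em) dQ.
have sP1 := size_dvdp_linear bot dP.
exists P1`_1, P1`_0, Q1`_1, Q1`_0; split=> //.
by rewrite /mobius -!horner_size2.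
Qed.

Lemma mobius_transfer p1 p0 q1 q0 Z1 Z2 g s :
  K p1 -> K p0 -> K q1 -> K q0 ->
  coefs_in K Z1 -> coefs_in K Z2 -> coefs_in K g -> coefs_in K s ->
  q1 * x + q0 != 0 ->
  Z1.[x] * s.[mobius p1 p0 q1 q0 x] = Z2.[x] * g.[mobius p1 p0 q1 q0 x] ->
  forall t, q1 * t + q0 != 0 ->
  Z1.[t] * s.[mobius p1 p0 q1 q0 t] = Z2.[t] * g.[mobius p1 p0 q1 q0 t].
Proof.
move=> Kp1 Kp0 Kq1 Kq0 KZ1 KZ2 Kg Ks Qx0 e t Qt0.
have eL c1 c0 u : (c1%:P * 'X + c0%:P).[u] = c1 * u + c0 by rewrite hornerMXaddC hornerC.
have KL c1 c0 : K c1 -> K c0 -> coefs_in K (c1%:P * 'X + c0%:P).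
  move=> Kc1 Kc0; apply: (coefs_inD HKs); last exact: coefs_inC.
  by apply: (coefs_inM HKs); [apply: coefs_inC | apply: coefs_inX].
set m := maxn (size g) (size s).
have sg : (size g <= m.+1)%N by apply: leq_trans (leq_maxl _ _) (leqnSn _).
have ss : (size s <= m.+1)%N by apply: leq_trans (leq_maxr _ _) (leqnSn _).
have := homog_identity KZ1 KZ2 Kg Ks (KL _ _ Kp1 Kp0) (KL _ _ Kq1 Kq0) sg ss.
rewrite !eL => /(_ Qx0 e) /(congr1 (horner^~ t)) /=.
rewrite !hornerM !horner_homog ?eL // mulrCA [RHS]mulrCA => /mulfI; apply.
by rewrite expf_neq0.
Qed.

End Transcendental.

Lemma immediate_approx (F : fieldType) (K R : F -> Prop) y a :
  is_subfield K -> is_valring R -> immediate K R -> R y -> K a -> y != a ->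
  exists e, [/\ K e, vle R 1 (y - e) & vlt R (y - a) (y - e)].
Proof.
move=> HK HR [himm_val himm_res] Ry Ka ya; have HKs := subfield_subring HK.
have [Rya | nRya] := classic (R (y - a)); last first.
  exists 0; rewrite subr0; split; [exact: subring0 | exact/vle1 |].
  by apply: (vlt_le_trans HR _ (proj2 (vle1 _ _) Ry)); apply/(vlt_nle HR) => /vle1.
have [c [Kc [c0 u]]] : exists c, K c /\ c != 0 /\ unit_in R ((y - a) / c).
  by apply: himm_val; rewrite subr_eq0.
have [r [[Kr Rr] mr]] := himm_res _ u.2.1.
have cya := unit_veq c0 u.
have ce : vlt R c (y - (a + c * r)).
  have -> : y - (a + c * r) = c * ((y - a) / c - r) by field.
  by rewrite -[c in vlt _ c]mulr1; apply/(vlt_mul2l _ _ _ c0); apply: maxideal_vlt1.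
exists (a + c * r); split; first by apply: subringD => //; apply: subringM.
  by apply: (vle_trans HR (proj2 (vle1 _ _) Rya)); apply: (vle_trans HR cya.2); case: ce.
exact: (vle_lt_trans HR cya.2 ce).
Qed.

Section MobiusContinuity.
Variables (F : fieldType) (K R : F -> Prop) (I : Type) (lt : I -> I -> Prop).
Variables (v : I -> F) (x p1 p0 q1 q0 : F).
Hypotheses (HK : is_subfield K) (HR : is_valring R) (himm : immediate K R).
Hypotheses (HL : limit_ordinal lt) (hpc : pseudo_convergent R lt v).
Hypotheses (hx : pseudo_limit R lt v x) (hnl : ~ (exists t, K t /\ pseudo_limit R lt v t)).
Hypotheses (Kp1 : K p1) (Kp0 : K p0) (Kq1 : K q1) (Kq0 : K q0) (Qx0 : q1 * x + q0 != 0).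
Let HKs := subfield_subring HK.
Let M := mobius p1 p0 q1 q0.

Lemma nonlimit_eventually t : K t ->
  exists i1, forall i, ole lt i1 i -> vlt R (x - t) (x - v i).
Proof.
by move=> Kt; apply: (not_pseudo_limit_eventually HR HL hpc hx) => lim; apply: hnl; exists t.
Qed.

Lemma mobius_denom_eventually :
  exists i1, forall i, ole lt i1 i -> veq R (q1 * v i + q0) (q1 * x + q0).
Proof.
have [-> | q10] := eqVneq q1 0.
  have [i1 _] := lo_inhabited HL.
  by exists i1 => i _; rewrite !mul0r !add0r; split; apply: vle_refl.
have Kg : K (- q0 / q1) by apply: (subringM HKs); [apply: (subringN HKs) | apply: (subfieldV HK)].
have [i1 far] := nonlimit_eventually Kg.
exists i1 => i /far gv.
have -> : q1 * v i + q0 = (q1 * x + q0) - q1 * (x - v i) by ring.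
apply: (veq_subl HR); have -> : q1 * x + q0 = q1 * (x - - q0 / q1) by field.
exact/vlt_mul2l.
Qed.

Lemma mobius_good_param : R (M x) -> p1 * q0 - p0 * q1 != 0 ->
  exists t, [/\ K t, q1 * t + q0 != 0, vle R 1 (M x - M t) &
    vle R (q1 * x + q0) (q1 * t + q0)].
Proof.
move=> RMx D0; have [q10 | q10] := eqVneq q1 0.
  have q00 : q0 != 0 by move: Qx0; rewrite q10 mul0r add0r.
  have p10 : p1 != 0 by apply: contraNneq D0 => ->; rewrite q10 !mul0r mulr0 subrr.
  have Mt : M (- p0 / p1) = 0 by rewrite /M /mobius [p1 * _]mulrC divfK // addNr mul0r.
  exists (- p0 / p1); rewrite Mt subr0 q10 !mul0r !add0r; split=> //.
  - by apply: (subringM HKs); [apply: (subringN HKs) | apply: (subfieldV HK)].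
  - exact/vle1.
  - exact: vle_refl.
set a := p1 / q1; have Ka : K a by apply: (subringM HKs) => //; apply: (subfieldV HK).
have ya0 : M x != a.
  rewrite -subr_eq0; have -> : M x - a = - (p1 * q0 - p0 * q1) / (q1 * (q1 * x + q0)).
    by rewrite /M /mobius /a; field; rewrite q10 Qx0.
  by rewrite mulf_neq0 ?oppr_eq0 // invr_eq0 mulf_neq0.
(* Taking e closer to M x than a = M(oo) keeps q1 t + q0 at least as large as
   q1 x + q0 for the preimage t of e. *)
have [e [Ke ye yae]] := immediate_approx HK HR himm RMx Ka ya0.
have ea0 : e - a != 0.
  by apply: contraPneq yae => /eqP; rewrite subr_eq0 => /eqP ->; apply: vlt_irr.
have pe0 : p1 - q1 * e != 0.
  have -> : p1 - q1 * e = - q1 * (e - a) by rewrite /a; field.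
  by rewrite mulf_neq0 // oppr_eq0.
pose t := (q0 * e - p0) / (p1 - q1 * e).
have Qt0 : q1 * t + q0 != 0.
  have -> : q1 * t + q0 = (p1 * q0 - p0 * q1) / (p1 - q1 * e) by rewrite /t; field.
  by rewrite mulf_neq0 // invr_eq0.
have Mt : M t = e by apply: (mulIf Qt0); rewrite /M /mobius divfK // /t; field.
exists t; rewrite Mt; split=> //.
  apply: (subringM HKs); first by apply: (subringB HKs) => //; apply: (subringM HKs).
  by apply: (subfieldV HK); apply: (subringB HKs) => //; apply: (subringM HKs).
apply/vle_div => //.
have -> : (q1 * t + q0) / (q1 * x + q0) = (M x - a) / (e - a).
  rewrite /M /mobius /a /t; field.
  by rewrite q10 Qx0 pe0 [e * q1]mulrC -opprB oppr_eq0 pe0.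
apply/vle_div => //; have -> : e - a = (M x - a) - (M x - e) by ring.
exact: (veq_subl HR yae).1.
Qed.

Lemma mobius_eventually_close : R (M x) ->
  exists i0, forall i, ole lt i0 i -> q1 * v i + q0 != 0 /\ vlt R 1 (M x - M (v i)).
Proof.
move=> RMx; have [i1 den] := mobius_denom_eventually.
have Qv0 i : ole lt i1 i -> q1 * v i + q0 != 0.
  by move=> /den [le _]; apply: vle_neq0 le.
have [D0 | D0] := eqVneq (p1 * q0 - p0 * q1) 0.
  exists i1 => i i1i; have Qvi := Qv0 i i1i; split=> //.
  have -> : M x - M (v i) = (p1 * q0 - p0 * q1) * (x - v i) / ((q1 * x + q0) * (q1 * v i + q0)).
    by rewrite /M /mobius; field; rewrite Qx0 Qvi.
  by rewrite D0 !mul0r; apply: (vlt0 HR (oner_neq0 F)).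
have [t [Kt Qt0 yt xt]] := mobius_good_param RMx D0.
have [i2 far] := nonlimit_eventually Kt.
have [i0 [i1i0 i2i0]] := lo_join HL i1 i2.
exists i0 => i i0i; have Qvi := Qv0 i (ole_trans HL i1i0 i0i); split=> //.
have fari := far i (ole_trans HL i2i0 i0i); have xt0 := vlt_neq0 HR fari.
have -> : M x - M (v i) = (x - v i) / (x - t) * ((M x - M t) * ((q1 * t + q0) / (q1 * v i + q0))).
  by rewrite /M /mobius; field; rewrite Qx0 Qvi Qt0 xt0.
apply: (vlt1_mulr HR); first exact/(vlt_div _ _ xt0).
apply: (subringM HR.1); first exact/vle1.
by apply/vle_div => //; apply: (vle_trans HR (den i (ole_trans HL i1i0 i0i)).1).
Qed.

End MobiusContinuity.

Definition loc_rep (F : fieldType) (V R : F -> Prop) (y z : F) :=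
  exists g s, [/\ coefs_in V g, coefs_in V s, s.[y] != 0, R s.[y]^-1 & z = g.[y] / s.[y]].

Lemma loc_poly_subalg_rep (F : fieldType) (V R A : F -> Prop) :
  is_subring V -> subset_of A R -> loc_poly_subalg V A ->
  exists y, R y /\ forall z, A z -> loc_rep V R y z.
Proof.
move=> HV AR [y [_ [S [SV [S1 [S0 [_ hA]]]]]]].
have V1 : Valg V y 1.
  by exists 1; rewrite hornerC; split=> //; apply: (coefs_inC HV (subring1 HV)).
exists y; split.
  apply: AR; apply/hA; exists y, 1; rewrite divr1; split=> //.
  by exists 'X; rewrite hornerX; split=> //; apply: (coefs_inX HV).
move=> z /hA [f [s [[g [Vg ->]] [Ss ->]]]]; have [h [Vh eh]] := SV _ Ss.
exists g, h; rewrite -eh; split=> //; first by apply/eqP => s0; apply: S0; rewrite -s0.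
by apply: AR; apply/hA; exists 1, s; rewrite div1r.
Qed.

Lemma filtered_union_loc_rep (F : fieldType) (V R : F -> Prop) z1 z2 :
  is_subring V -> filtered_union_loc_poly V R -> R z1 -> R z2 ->
  exists y, [/\ R y, loc_rep V R y z1 & loc_rep V R y z2].
Proof.
move=> HV [J [A [_ [loc [dir un]]]]] Rz1 Rz2.
have [[j1 A1] [j2 A2]] := conj ((un z1).1 Rz1) ((un z2).1 Rz2).
have [k [sub1 sub2]] := dir j1 j2.
have AkR : subset_of (A k) R by move=> z Akz; apply/(un z); exists k.
have [y [Ry rep]] := loc_poly_subalg_rep HV AkR (loc k).
by exists y; split=> //; apply: rep; [exact: (sub1 _ A1) | exact: (sub2 _ A2)].
Qed.

Lemma filtered_union_eventually_vle (F : fieldType) (K R : F -> Prop)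
  (I : Type) (lt : I -> I -> Prop) (v : I -> F) (x : F) :
  is_subfield K -> is_valring R -> immediate K R -> limit_ordinal lt ->
  pseudo_convergent R lt v -> R x -> pseudo_limit R lt v x ->
  ~ (exists t, K t /\ pseudo_limit R lt v t) ->
  generated_by K x -> transcendental_over K x ->
  filtered_union_loc_poly (Vof K R) R ->
  forall Z1 Z2 : {poly F}, coefs_in K Z1 -> coefs_in K Z2 ->
  Z2.[x] != 0 -> R (Z1.[x] / Z2.[x]) ->
  exists i0, forall i, ole lt i0 i -> vle R Z2.[v i] Z1.[v i].
Proof.
move=> HK HR himm HL hpc Rx hx hnl hgen htr hfu Z1 Z2 KZ1 KZ2 Z2x0 Rz.
have HKs := subfield_subring HK.
have VK : subset_of (Vof K R) K by move=> ? [].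
have VR : subset_of (Vof K R) R by move=> ? [].
have [y [Ry [g0 [s0 [Vg0 Vs0 s0y0 _ ex]]] [g1 [s1 [Vg1 Vs1 s1y0 Rs1 ez]]]]] :=
  filtered_union_loc_rep (subringI HKs HR.1) hfu Rx Rz.
have [P [Q [KP [KQ [Qx0 ey]]]]] := hgen y.
have [p1 [p0 [q1 [q0 [Kp1 Kp0 Kq1 Kq0 [Qlx0 eyM]]]]]] :=
  mobius_of_inverse HK htr KP KQ Qx0 ey (coefs_in_sub VK Vg0) (coefs_in_sub VK Vs0) s0y0 ex.
have RMx : R (mobius p1 p0 q1 q0 x) by rewrite -eyM.
have [i0 close] := mobius_eventually_close HK HR himm HL hpc hx hnl Kp1 Kp0 Kq1 Kq0 Qlx0 RMx.
have exy : Z1.[x] * s1.[y] = Z2.[x] * g1.[y].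
  by rewrite -[Z1.[x]](divfK Z2x0) ez mulrAC divfK // mulrC.
rewrite eyM in exy.
have transfer := mobius_transfer HK htr Kp1 Kp0 Kq1 Kq0 KZ1 KZ2
  (coefs_in_sub VK Vg1) (coefs_in_sub VK Vs1) Qlx0 exy.
set M := mobius p1 p0 q1 q0 in eyM close transfer.
exists i0 => i /close [Qv0]; rewrite -eyM => yMv.
have RMv : R (M (v i)).
  by rewrite -(subKr y (M (v i))); apply: (subringB HR.1) => //; apply/vle1; case: yMv.
have [sMv0 RsMv] := horner_unit_perturb HR (coefs_in_sub VR Vs1) Ry RMv yMv s1y0 Rs1.
exists (g1.[M (v i)] / s1.[M (v i)]); split; last by rewrite mulrA -(transfer _ Qv0) mulfK.
apply: (subringM HR.1) => //.
by apply: (coefs_in_horner HR.1) => //; apply: coefs_in_sub VR Vg1.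
Qed.

Theorem corollary3p3 (K' : fieldType) (K V' : K' -> Prop)
  (I : Type) (lt : I -> I -> Prop) (v : I -> K') (x : K') :
  is_subfield K -> is_valring V' -> immediate K V' ->
  limit_ordinal lt ->
  (forall i, Vof K V' (v i)) ->
  pseudo_convergent V' lt v -> ~ fundamental K V' lt v ->
  V' x -> pseudo_limit V' lt v x ->
  ~ (exists y, K y /\ pseudo_limit V' lt v y) ->
  generated_by K x ->
  transcendental_over K x ->
  (krull_dim1 (Vof K V') \/ henselian (Vof K V')) ->
  algebraic_seq (Vof K V') V' lt v ->
  ~ filtered_union_loc_poly (Vof K V') V'.
Proof.
move=> HK HR himm HL hv hpc _ Rx hx hnl hgen htr _ [f [Vf [i0 finc]]] hfu.
have HKs := subfield_subring HK.
have evle := filtered_union_eventually_vle HK HR himm HL hpc Rx hx hnl hgen htr hfu.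
have Kf : coefs_in K f by apply: coefs_in_sub Vf => ? [].
have f0 : f != 0.
  apply/eqP => f0; have [i1 i0i1] := lo_succ HL i0.
  by have := finc _ _ (or_introl erefl) i0i1; rewrite f0 !horner0 => /vlt_irr.
have fx0 : f.[x] != 0.
  by apply: contra f0 => /eqP /(htr _ Kf) ->.
have [a [Ka [a0 ua]]] := himm.1 _ fx0.
have ax0 : (a%:P).[x] != 0 by rewrite hornerC.
have Rfa : V' (f.[x] / (a%:P).[x]) by rewrite hornerC; case: ua => _ [].
have [i1 above] := evle f a%:P Kf (coefs_inC HKs Ka) ax0 Rfa.
have [j [i0j i1j]] := lo_join HL i0 i1.
have Rfj : V' (f.[v j] / f.[x]).
  apply/vle_div => //; apply: (vle_trans HR (unit_veq a0 ua).2).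
  by move: (above j i1j); rewrite hornerC.
have Kfj : coefs_in K (f.[v j])%:P.
  by apply: (coefs_inC HKs); apply: (coefs_in_horner HKs Kf (hv j).1).
have Rfjx : V' ((f.[v j])%:P.[x] / f.[x]) by rewrite hornerC.
have [i2 below] := evle (f.[v j])%:P f Kfj Kf fx0 Rfjx.
have [k [jk i2k]] := lo_join HL j i2; have [i ki] := lo_succ HL k.
have [_ nle] := finc j i i0j (ole_lt_trans HL jk ki).
by apply: nle; move: (below i (ole_trans HL i2k (or_intror ki))); rewrite hornerC.
Qed.
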